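(* Let $m\ge1$ be an integer, $q$ a prime power, and consider ${\rm PG}(4m-3,q^2)$ equipped with the non-degenerate Hermitian polar space $\mathcal H(4m-3,q^2)$ obtained by field reduction as follows: take a non-degenerate Hermitian form $h$ on $V(2,q^{4m-2})$ (with respect to $x\mapsto x^{q^{2m-1}}$), regard $V(2,q^{4m-2})$ as a $(4m-2)$-dimensional vector space $\bar V$ over ${\rm GF}(q^2)$, and let $\mathcal H(4m-3,q^2)$ be defined by the form $\bar h={\rm Tr}_{q^{4m-2}|q^2}\circ h$, with associated unitary polarity $\rho$. Then there exists a $(2m-2)$-spread $\mathbf S$ of ${\rm PG}(4m-3,q^2)$ such that $q^{2m-1}+1$ members of $\mathbf S$ are generators of $\mathcal H(4m-3,q^2)$ and the remaining $q^{4m-2}-q^{2m-1}$ members occur in $(q^{4m-2}-q^{2m-1})/2$ pairs of the form $\{\Delta,\Delta^{\rho}\}$ with $\Delta\cap\Delta^{\rho}=\emptyset$.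
   Context: ${\rm Tr}_{q^{4m-2}|q^2}(x)=\sum_{i=0}^{2m-2}x^{q^{2i}}$. A $(2m-2)$-spread of ${\rm PG}(4m-3,q^2)$ is a set of pairwise disjoint $(2m-2)$-dimensional projective subspaces partitioning the point set. Generators of $\mathcal H(4m-3,q^2)$ are its totally isotropic subspaces of projective dimension $2m-2$. *)

From HB Require Import structures.
From mathcomp Require Import all_boot all_order all_algebra all_field.
Set Implicit Arguments. Unset Strict Implicit. Unset Printing Implicit Defensive.
Import GRing.Theory.
Local Open Scope ring_scope.

Definition lscale (L : fieldType) (a : L) (u : L * L) : L * L :=
  (a * u.1, a * u.2).

Definition is_herm_form (L : fieldType) (sigma : L -> L)
    (h : L * L -> L * L -> L) : Prop :=
  [/\ forall u v w, h (u + v) w = h u w + h v w,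
      forall a u v, h (lscale a u) v = a * h u v &
      forall u v, h v u = sigma (h u v)].

Definition nondegen_form (L : fieldType) (h : L * L -> L * L -> L) : Prop :=
  forall u, (forall v, h u v = 0) -> u = 0.

Definition hconj (L : fieldType) (q m : nat) (x : L) : L := x ^+ (q ^ (2 * m - 1)).

Definition trq2 (L : fieldType) (q m : nat) (x : L) : L :=
  \sum_(i < 2 * m - 1) x ^+ (q ^ (2 * i)).

Definition hbar (L : fieldType) (q m : nat) (h : L * L -> L * L -> L)
    (u v : L * L) : L := trq2 q m (h u v).

(* GF(q^2)-subspaces of Vbar = L * L, L viewed as a vector space over K. *)
Definition totally_isotropic (K : fieldType) (L : fieldExtType K)
    (f : L * L -> L * L -> L) (D : {vspace (L * L)%type}) : Prop :=
  forall u v, u \in D -> v \in D -> f u v = 0.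

Definition is_polar_of (K : fieldType) (L : fieldExtType K)
    (f : L * L -> L * L -> L) (D E : {vspace (L * L)%type}) : Prop :=
  forall v, v \in E <-> (forall u, u \in D -> f u v = 0).

(* A spread by subspaces of vector dimension d (projective dim d-1):
   pairwise trivially intersecting, covering every vector. *)
Definition is_spread (K : fieldType) (L : fieldExtType K) (d : nat)
    (S : seq {vspace (L * L)%type}) : Prop :=
  [/\ uniq S,
      forall D, D \in S -> \dim D = d,
      forall D E, D \in S -> E \in S -> D != E -> (D :&: E)%VS = 0%VS &
      forall v : L * L, exists2 D, D \in S & v \in D].

Definition prime_power (q : nat) : Prop :=
  exists p k, [/\ prime p, (0 < k)%N & q = (p ^ k)%N].

From HB Require Import structures.
From mathcomp Require Import all_boot all_order all_algebra all_field.
From mathcomp Require Import zify ring.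
Set Implicit Arguments.
Unset Strict Implicit.
Unset Printing Implicit Defensive.
Import GRing.Theory.
Local Open Scope ring_scope.

(* The L-lines of V(2, L), i.e. the points of PG(1, L) with L = GF(Q^2) and
   Q = q^(2m-1), read over K = GF(q^2) form a Desarguesian (2m-2)-spread.
   Take a basis u, w of V(2, L) orthogonal for h with h(u,u), h(w,w) nonzero:
   the point <u + y w> is isotropic iff y^(Q+1) = -h(u,u)/h(w,w), a norm
   equation with Q + 1 solutions, and <w> is not isotropic.  An isotropic
   L-line is totally isotropic for Tr o h.  A non-isotropic one is not, because
   the trace does not vanish identically; its polar under Tr o h is its
   h-orthogonal L-line, which is again non-isotropic and meets it trivially. *)

Lemma sum_saturated (T : finType) (A : {pred T}) (f : T -> nat) (a b : nat) :
  (#|A| <= a)%N -> (forall i, i \in A -> f i <= b)%N ->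
  (\sum_(i in A) f i = a * b)%N -> forall i, i \in A -> f i = b.
Proof.
move=> cardA le_fb sumA i Ai; apply/eqP; rewrite eqn_leq le_fb //= leqNgt.
apply/negP => lt_fib; move: sumA cardA; rewrite (bigD1 i) // (cardD1 i) Ai /=.
set rest := (\sum_(j in A | j != i) f j)%N; set c := #|_| => sumA cardA.
have le_rest : (rest <= c * b)%N.
  rewrite -sum_nat_const [leqRHS](eq_bigl (fun j => (j \in A) && (j != i))).
    by apply: leq_sum => j /andP[Aj _]; apply: le_fb.
  by move=> j; rewrite !inE andbC.
have := leq_mul cardA (leqnn b); rewrite mulnDl mul1n; lia.
Qed.

Section FiniteField.
Variable F : finFieldType.

Lemma card_roots_lt (p : {poly F}) : p != 0 -> (#|[pred x | root p x]| < size p)%N.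
Proof.
move=> p_neq0; rewrite cardE; apply: max_poly_roots => //; last exact: enum_uniq.
by apply/allP => x; rewrite mem_enum.
Qed.

Lemma exists_nonroot (p : {poly F}) : p != 0 -> (size p <= #|F|)%N ->
  exists x, ~~ root p x.
Proof.
move=> p_neq0 size_p; apply/existsP; rewrite -negb_forall.
apply/negP => /forallP all_roots; have := card_roots_lt p_neq0.
rewrite (eq_card (B := F)) => [|x]; first by rewrite ltnNge size_p.
by rewrite !inE all_roots.
Qed.

Lemma card_expr_eq_le (n : nat) (c : F) : (#|[pred y : F | y ^+ n.+1 == c]| <= n.+1)%N.
Proof.
have p_neq0 : ('X^(n.+1) - c%:P : {poly F}) != 0.
  by rewrite -size_poly_eq0 size_XnsubC.
rewrite -ltnS -(size_XnsubC c (ltn0Sn n)).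
apply: leq_ltn_trans (card_roots_lt p_neq0); apply: subset_leq_card.
by apply/subsetP => y; rewrite !inE rootE !hornerE subr_eq0.
Qed.

Lemma card_fixed_units_le (Q : nat) : (1 < Q)%N ->
  (#|[pred x : F | (x != 0%R) && (x ^+ Q == x)]| <= Q.-1)%N.
Proof.
move=> Q_gt1.
have size_p : size ('X^Q - 'X : {poly F}) = Q.+1.
  by rewrite size_polyDl ?size_polyXn // size_polyN size_polyX.
have p_neq0 : ('X^Q - 'X : {poly F}) != 0 by rewrite -size_poly_eq0 size_p.
have roots_p : [pred x | root ('X^Q - 'X) x] =i
    [predU1 (0 : F) & [pred x : F | (x != 0) && (x ^+ Q == x)]].
  move=> x; rewrite !inE rootE !hornerE subr_eq0.
  by have [->|//] := eqVneq x 0; rewrite expr0n gtn_eqF ?eqxx // ltnW.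
have := card_roots_lt p_neq0; rewrite (eq_card roots_p) cardU1 size_p !inE eqxx /=.
by rewrite add1n ltnS => lt_cQ; rewrite -ltnS prednK // ltnW.
Qed.

Lemma card_norm_fiber (Q : nat) (c : F) : (1 < Q)%N -> #|F| = (Q ^ 2)%N ->
  c != 0 -> c ^+ Q = c -> #|[pred y : F | y ^+ Q.+1 == c]| = Q.+1.
Proof.
move=> Q_gt1 cardF c_neq0 cQ.
pose fixed := [pred x : F | (x != 0) && (x ^+ Q == x)].
pose fiber j := #|[pred y : F | y ^+ Q.+1 == j]|.
have norm_fixed y : y != 0 -> y ^+ Q.+1 \in fixed.
  move=> y_neq0; rewrite inE expf_neq0 //= -exprM mulSn exprD mulnn.
  by rewrite -cardF expf_card exprSr.
have sum_fibers : (\sum_(j in fixed) fiber j = (Q.-1) * Q.+1)%N.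
  transitivity #|[pred y : F | y != 0]|; last first.
    rewrite (cardC1 0 : #|predC1 0| = _) cardF; lia.
  symmetry; rewrite -sum1_card (partition_big (fun y => y ^+ Q.+1) (mem fixed)) //=.
  apply: eq_bigr => j fixed_j; rewrite /fiber -sum1_card; apply: eq_bigl => y.
  rewrite !inE; have [->|//] := eqVneq y 0.
  by rewrite expr0n /= eq_sym; move: fixed_j; rewrite inE => /andP[/negbTE ->].
(* At most Q - 1 fibres of size at most Q + 1 partition the Q^2 - 1 units. *)
apply: (sum_saturated (card_fixed_units_le Q_gt1) _ sum_fibers).
  by move=> j _; apply: card_expr_eq_le.
by rewrite inE c_neq0 cQ eqxx.
Qed.

Lemma exprN1_sqrt_card (Q : nat) : #|F| = (Q ^ 2)%N -> (-1 : F) ^+ Q = -1.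
Proof.
(* If (-1)^Q = 1 then -1 = (-1)^(Q^2) = 1. *)
move=> cardF; have := sqrf_eq1 ((-1 : F) ^+ Q).
rewrite -exprM mulnC exprM sqrrN !expr1n eqxx => /esym/orP[/eqP e1|/eqP //].
by have := expf_card (-1 : F); rewrite cardF expnS expn1 exprM e1 expr1n.
Qed.

Lemma exists_Frobenius_trace_neq0 (Q : nat) : (1 < Q)%N -> #|F| = (Q ^ 2)%N ->
  exists t : F, t ^+ Q + t != 0.
Proof.
move=> Q_gt1 cardF.
have size_p : size ('X^Q + 'X : {poly F}) = Q.+1.
  by rewrite size_polyDl ?size_polyXn ?size_polyX.
have p_neq0 : ('X^Q + 'X : {poly F}) != 0 by rewrite -size_poly_eq0 size_p.
have [|t] := exists_nonroot p_neq0; last by rewrite rootE !hornerE; exists t.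
by rewrite size_p cardF expnS expn1; nia.
Qed.

Lemma exists_trace_poly_neq0 (q n : nat) : (1 < q)%N -> (0 < n)%N ->
  (q ^ (2 * n.-1) < #|F|)%N -> exists t : F, \sum_(i < n) t ^+ (q ^ (2 * i)) != 0.
Proof.
move=> q_gt1 n_gt0 card_gt.
pose P : {poly F} := \sum_(i < n) 'X^(q ^ (2 * i)).
have P_coef1 : P`_1 = 1.
  rewrite /P -(prednK n_gt0) coef_sum big_ord_recl coefXn expn0 eqxx big1 ?addr0 //.
  by move=> i _; rewrite coefXn -{1}(expn0 q) eqn_exp2l // eq_sym muln_eq0.
have P_neq0 : P != 0 by apply: contra_neq (oner_neq0 F) => P_0; rewrite -P_coef1 P_0 coef0.
have [|t] := exists_nonroot P_neq0; last first.
  by rewrite rootE /P horner_sum; under eq_bigr do rewrite hornerXn; exists t.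
apply: leq_trans (size_sum _ _ _) _; apply/bigmax_leqP => i _; rewrite size_polyXn.
apply: leq_ltn_trans card_gt; rewrite leq_pexp2l ?(ltnW q_gt1) // leq_mul2l /=.
by rewrite -ltnS prednK.
Qed.

End FiniteField.

Lemma card_finFieldExt (K : finFieldType) (L : fieldExtType K) :
  #|FinFieldExtType L| = (#|K| ^ \dim {:L})%N.
Proof.
rewrite -(@card_vspacef K (finvect_type L) (Vector.class (finvect_type L))).
by rewrite card_vspace.
Qed.

Section Plane.
Variable L : fieldType.
Implicit Types (a b x y : L) (u v p r : L * L).

Lemma lscaleA a b u : lscale a (lscale b u) = lscale (a * b) u.
Proof. by rewrite /lscale /= !mulrA. Qed.

Lemma lscale1 u : lscale 1 u = u.
Proof. by case: u => x y; rewrite /lscale /= !mul1r. Qed.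

Lemma lscale0 u : lscale 0 u = 0.
Proof. by rewrite /lscale !mul0r. Qed.

Lemma lscaleDr a u v : lscale a (u + v) = lscale a u + lscale a v.
Proof. by rewrite /lscale /= !mulrDr. Qed.

Lemma lscaleBl a b u : lscale (a - b) u = lscale a u - lscale b u.
Proof. by rewrite /lscale /= !mulrBl. Qed.

Lemma lscale_eq0 a u : (lscale a u == 0) = (a == 0) || (u == 0).
Proof.
case: u => x y; rewrite /lscale /= -[0]/(0, 0) !xpair_eqE !mulf_eq0.
by case: (a == 0).
Qed.

Lemma pair_lscaleE v : v = lscale v.1 (1, 0) + lscale v.2 (0, 1).
Proof. by case: v => x y; apply: injective_projections; rewrite /lscale /=; ring. Qed.

Definition indep p r := forall x y, lscale x p + lscale y r = 0 -> x = 0 /\ y = 0.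

Lemma indep_coord p r x y x' y' : indep p r ->
  lscale x p + lscale y r = lscale x' p + lscale y' r -> x = x' /\ y = y'.
Proof.
move=> ind_pr /eqP; rewrite -subr_eq0 => /eqP eq0.
have [/eqP + /eqP] : x - x' = 0 /\ y - y' = 0.
  by apply: ind_pr; rewrite !lscaleBl -eq0 addrACA opprD.
by rewrite !subr_eq0 => /eqP -> /eqP ->.
Qed.

Lemma indep_span p r : indep p r -> forall v, exists x y, v = lscale x p + lscale y r.
Proof.
case: p => p1 p2; case: r => r1 r2 ind_pr [v1 v2].
have [det0|det_neq0] := eqVneq (p1 * r2 - p2 * r1) 0; last first.
  exists ((v1 * r2 - v2 * r1) / (p1 * r2 - p2 * r1)).
  exists ((p1 * v2 - p2 * v1) / (p1 * r2 - p2 * r1)).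
  by apply: injective_projections; rewrite /lscale /=; field.
have rel1 : lscale r2 (p1, p2) + lscale (- p2) (r1, r2) = 0.
  apply: injective_projections; rewrite /lscale /=; last ring.
  by rewrite -det0; ring.
have rel2 : lscale r1 (p1, p2) + lscale (- p1) (r1, r2) = 0.
  apply: injective_projections; rewrite /lscale /=; first ring.
  by rewrite -oppr0 -det0; ring.
have [r2_0 /eqP] := ind_pr _ _ rel1; have [r1_0 /eqP] := ind_pr _ _ rel2.
rewrite !oppr_eq0 => /eqP p1_0 /eqP p2_0.
have := ind_pr 1 0; rewrite r1_0 r2_0 p1_0 p2_0 lscale0 addr0 /lscale !mulr0.
by case/(_ erefl) => /eqP; rewrite oner_eq0.
Qed.

Definition in_basis u w (c : L * L) : L * L := lscale c.1 u + lscale c.2 w.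

Lemma in_basis_lscale u w a c : lscale a (in_basis u w c) = in_basis u w (lscale a c).
Proof. by rewrite /in_basis lscaleDr !lscaleA. Qed.

Lemma in_basis_inj u w : indep u w -> injective (in_basis u w).
Proof. by move=> ind_uw [x y] [x' y'] /(indep_coord ind_uw) /= [-> ->]. Qed.

Lemma in_basis_onto u w v : indep u w -> exists c, v = in_basis u w c.
Proof. by move=> ind_uw; have [x [y ->]] := indep_span ind_uw v; exists (x, y). Qed.

End Plane.

Section HermitianForm.
Variables (L : fieldType) (Q : nat) (h : L * L -> L * L -> L).
Hypothesis herm : is_herm_form (fun x : L => x ^+ Q) h.
Hypothesis nondeg : nondegen_form h.
Hypothesis Q_gt0 : (0 < Q)%N.
Implicit Types (a b x y t : L) (u v w p r : L * L).

Lemma herm_addl u v w : h (u + v) w = h u w + h v w. Proof. by case: herm. Qed.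
Lemma herm_lscalel a u v : h (lscale a u) v = a * h u v. Proof. by case: herm. Qed.
Lemma herm_conj u v : h v u = h u v ^+ Q. Proof. by case: herm. Qed.

Lemma herm_lscaler u a v : h u (lscale a v) = a ^+ Q * h u v.
Proof. by rewrite herm_conj herm_lscalel exprMn -herm_conj. Qed.

Lemma herm_lin u x p y r : h (lscale x p + lscale y r) u = x * h p u + y * h r u.
Proof. by rewrite herm_addl !herm_lscalel. Qed.

Lemma herm_eq0C u v : (h v u == 0) = (h u v == 0).
Proof. by rewrite herm_conj expf_eq0 Q_gt0. Qed.

Lemma herm_self_fixed u : h u u ^+ Q = h u u.
Proof. by rewrite -herm_conj. Qed.

Lemma herm_nondegl p : (forall v, h v p = 0) -> p = 0.
Proof. by move=> orth_p; apply: nondeg => v; apply/eqP; rewrite -herm_eq0C orth_p. Qed.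

Lemma herm_orth_lscale p r v : h p p != 0 -> h r p = 0 -> indep p r ->
  h v p = 0 <-> exists b, v = lscale b r.
Proof.
move=> pp_neq0 rp_0 ind_pr; have [x [y ->]] := indep_span ind_pr v.
rewrite herm_lin rp_0 mulr0 addr0; split => [/eqP|[b]].
  by rewrite mulf_eq0 (negbTE pp_neq0) orbF => /eqP ->; exists y; rewrite lscale0 add0r.
rewrite -[lscale b r]add0r -(lscale0 p) => /(indep_coord ind_pr)[-> _].
by rewrite mul0r.
Qed.

Lemma herm0l v : h 0 v = 0.
Proof. by rewrite -(lscale0 v) herm_lscalel mul0r. Qed.

Lemma herm_perp p : h p p != 0 -> exists r, [/\ h r p = 0, h r r != 0 & indep p r].
Proof.
move=> pp_neq0.
pose r := lscale (h (0, 1) p) (1, 0) + lscale (- h (1, 0) p) (0, 1).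
have rp_0 : h r p = 0 by rewrite herm_lin mulNr mulrC addrN.
have r_neq0 : r != 0.
  apply: contra pp_neq0 => /eqP r_0.
  have e2p_0 : h (0, 1) p = 0 by have := congr1 fst r_0; rewrite /= mulr1 mulr0 addr0.
  have e1p_0 : h (1, 0) p = 0.
    apply/eqP; rewrite -oppr_eq0.
    by have := congr1 snd r_0; rewrite /= mulr1 mulr0 add0r => ->.
  suff -> : p = 0 by rewrite herm0l.
  by apply: herm_nondegl => v; rewrite [v]pair_lscaleE herm_lin e1p_0 e2p_0 !mulr0 addr0.
have ind_pr : indep p r.
  move=> x y rel; have /eqP := congr1 (h^~ p) rel.
  rewrite /= herm_lin rp_0 mulr0 addr0 herm0l mulf_eq0 (negbTE pp_neq0) orbF => /eqP x_0.
  move: rel; rewrite x_0 lscale0 add0r => /eqP; rewrite lscale_eq0 (negbTE r_neq0) orbF.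
  by move=> /eqP.
have pr_0 : h p r = 0 by apply/eqP; rewrite -herm_eq0C rp_0.
exists r; split => //; apply: contra r_neq0 => /eqP rr_0; apply/eqP/herm_nondegl => v.
have [x [y ->]] := indep_span ind_pr v.
by rewrite herm_lin rr_0 pr_0 !mulr0 addr0.
Qed.

(* Only additivity in the first argument is assumed, so an expansion in the
   second argument goes through [herm_conj] and needs all but one term to
   vanish. *)
Lemma herm_orth_norm u w y : h w u = 0 ->
  h (u + lscale y w) (u + lscale y w) = h u u + y ^+ Q.+1 * h w w.
Proof.
move=> wu_0; have uw_0 : h u w = 0 by apply/eqP; rewrite -herm_eq0C wu_0.
rewrite herm_addl herm_lscalel [h u _]herm_conj [h w _]herm_conj !herm_addl.
rewrite !herm_lscalel wu_0 uw_0 mulr0 addr0 add0r.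
by rewrite !herm_self_fixed exprMn herm_self_fixed mulrA -exprS.
Qed.

Lemma herm_exists_aniso : (exists t, t ^+ Q + t != 0) -> exists u, h u u != 0.
Proof.
(* If (1,0), (0,1) are isotropic and b = h (1,0) (0,1), then
   h ((1,0) + s (0,1)) ((1,0) + s (0,1)) = s^Q b + s b^Q; take s = b t. *)
move=> [t t_neq0].
have [e1_iso|] := eqVneq (h (1, 0) (1, 0)) 0; last by exists (1, 0).
have [e2_iso|] := eqVneq (h (0, 1) (0, 1)) 0; last by exists (0, 1).
set b := h (1, 0) (0, 1); have e21 : h (0, 1) (1, 0) = b ^+ Q by rewrite herm_conj.
have b_neq0 : b != 0.
  apply/eqP => b_0; have e1_0 : ((1, 0) : L * L) = 0.
    apply: herm_nondegl => v.
    by rewrite [v]pair_lscaleE herm_lin e1_iso e21 b_0 expr0n gtn_eqF // !mulr0 addr0.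
  by have /eqP := congr1 fst e1_0; rewrite oner_eq0.
exists ((1, 0) + lscale (b * t) (0, 1)).
rewrite herm_addl herm_lscalel [h (1, 0) _]herm_conj [h (0, 1) _]herm_conj.
rewrite !herm_addl !herm_lscalel e1_iso e2_iso e21 -/b.
have bQQ : b ^+ Q ^+ Q = b by rewrite -e21 -herm_conj.
rewrite mulr0 addr0 add0r !exprMn bQQ.
have -> : b ^+ Q * t ^+ Q * b + b * t * b ^+ Q = b * b ^+ Q * (t ^+ Q + t) by ring.
by rewrite !mulf_neq0 // expf_neq0.
Qed.

End HermitianForm.

Section LLines.
Variables (K : fieldType) (L : fieldExtType K).
Implicit Types (a : L) (p r v : L * L).

Definition lmul p a : L * L := lscale a p.

Fact lmul_is_linear p : linear (lmul p).
Proof. by move=> k a b; rewrite /lmul /lscale /= !mulrDl -!scalerAl. Qed.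

HB.instance Definition _ p :=
  GRing.isLinear.Build K L (L * L)%type *:%R (lmul p) (lmul_is_linear p).

(* Field reduction: the point <p> of PG(1, L) as a K-subspace of L * L. *)
Definition lline p : {vspace (L * L)%type} := (linfun (lmul p) @: fullv)%VS.

Lemma llineP p v : reflect (exists a, v = lscale a p) (v \in lline p).
Proof.
by apply: (iffP memv_imgP) => [[a _ ->]|[a ->]]; exists a; rewrite ?memvf ?lfunE.
Qed.

Lemma dim_lline p : p != 0 -> \dim (lline p) = \dim {:L}.
Proof.
move=> p_neq0; rewrite /lline limg_dim_eq //; apply/eqP; rewrite -subv0.
apply/subvP => a; rewrite memv_cap memvf memv_ker lfunE /= /lmul.
by rewrite lscale_eq0 (negbTE p_neq0) orbF memv0.
Qed.

Lemma lline_lscale a p : a != 0 -> lline (lscale a p) = lline p.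
Proof.
move=> a_neq0; apply/vspaceP => v; apply/llineP/llineP => -[b ->].
  by exists (b * a); rewrite lscaleA.
by exists (b / a); rewrite lscaleA divfK.
Qed.

Lemma lline_cap0 p r : indep p r -> (lline p :&: lline r = 0)%VS.
Proof.
move=> ind_pr; apply/eqP; rewrite -subv0; apply/subvP => v.
rewrite memv_cap memv0 => /andP[/llineP[a ->] /llineP[b ab]].
have [-> _] : a = 0 /\ 0 = b by apply: (indep_coord ind_pr); rewrite !lscale0 addr0 add0r.
by rewrite lscale0.
Qed.

End LLines.

Section ProjectiveLine.
Variables (K : finFieldType) (L : fieldExtType K).
Local Notation FL := (FinFieldExtType L).
Implicit Types (a : L) (c d : L * L).

(* Representatives of the points of PG(1, L). *)
Definition proj_coords : seq (L * L) := (0, 1) :: [seq (1, y : L) | y <- enum FL].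

Lemma proj_coordsP d : d \in proj_coords -> d = (0, 1) \/ exists y, d = (1, y).
Proof. by rewrite inE => /predU1P[->|/mapP[y _ ->]]; [left | right; exists y]. Qed.

Lemma proj_coords_neq0 d : d \in proj_coords -> d != 0.
Proof.
case/proj_coordsP => [|[y]] ->; apply/eqP.
  by move/(congr1 snd)/eqP; rewrite oner_eq0.
by move/(congr1 fst)/eqP; rewrite oner_eq0.
Qed.

Lemma proj_coords_uniq : uniq proj_coords.
Proof.
rewrite /= map_inj_uniq => [|y y' [] //]; rewrite (enum_uniq FL) andbT.
by apply/negP => /mapP[y _ [/eqP]]; rewrite eq_sym oner_eq0.
Qed.

Lemma proj_coords_cover c : exists2 d, d \in proj_coords & exists a, c = lscale a d.
Proof.
case: c => x y; have [-> | x_neq0] := eqVneq x 0.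
  by exists (0, 1); rewrite ?mem_head //; exists y; rewrite /lscale mulr0 mulr1.
exists (1, y / x); first by rewrite inE; apply/orP; right; apply: (map_f _ (mem_enum FL _)).
by exists x; rewrite /lscale mulr1 mulrC divfK.
Qed.

Lemma proj_coords_lscale_inj d d' a a' : d \in proj_coords -> d' \in proj_coords ->
  a != 0 -> lscale a d = lscale a' d' -> d = d'.
Proof.
move=> /proj_coordsP[|[y]] -> /proj_coordsP[|[y']] -> // a_neq0 [].
- by rewrite mulr0 mulr1 => <-; rewrite mul0r mulr1 => /eqP; rewrite (negbTE a_neq0).
- by rewrite mulr1 mulr0 => /eqP; rewrite (negbTE a_neq0).
- by rewrite !mulr1 => <- /(mulfI a_neq0) ->.
Qed.

Lemma size_proj_coords : size proj_coords = #|FL|.+1.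
Proof. by rewrite /= size_map cardE. Qed.

End ProjectiveLine.

Lemma is_spread_perm (K : fieldType) (L : fieldExtType K) (n : nat)
    (S S' : seq {vspace (L * L)%type}) :
  perm_eq S S' -> is_spread n S -> is_spread n S'.
Proof.
move=> eqSS' [uniqS dimS capS coverS]; have memS := perm_mem eqSS'.
split; first by rewrite -(perm_uniq eqSS').
- by move=> D; rewrite -memS; apply: dimS.
- by move=> D E; rewrite -!memS; apply: capS.
- by move=> v; have [D SD vD] := coverS v; exists D; rewrite -?memS.
Qed.

Section DesarguesianSpread.
Variables (K : finFieldType) (L : fieldExtType K) (u w : L * L).
Hypothesis ind_uw : indep u w.
Implicit Types (a : L) (c d v : L * L).

Definition proj_lines : seq {vspace (L * L)%type} :=
  [seq lline (in_basis u w d) | d <- proj_coords L].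

Lemma in_basis_proj_cover v :
  exists2 d, d \in proj_coords L & exists a, v = lscale a (in_basis u w d).
Proof.
have [c ->] := in_basis_onto v ind_uw; have [d pc_d [a ->]] := proj_coords_cover c.
by exists d => //; exists a; rewrite in_basis_lscale.
Qed.

Lemma in_basis_proj_neq0 d : d \in proj_coords L -> in_basis u w d != 0.
Proof.
move=> pc_d; apply: contra (proj_coords_neq0 pc_d) => /eqP ib_0; apply/eqP.
by apply: (in_basis_inj ind_uw); rewrite ib_0 /in_basis !lscale0 addr0.
Qed.

Lemma proj_lines_meet d d' v : d \in proj_coords L -> d' \in proj_coords L ->
  v \in lline (in_basis u w d) -> v \in lline (in_basis u w d') -> v != 0 -> d = d'.
Proof.
move=> pc_d pc_d' /llineP[a ->] /llineP[a' eq_v].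
rewrite lscale_eq0 negb_or => /andP[a_neq0 _].
apply: (proj_coords_lscale_inj (a' := a') pc_d pc_d' a_neq0).
by apply: (in_basis_inj ind_uw); rewrite -!in_basis_lscale.
Qed.

Lemma proj_lines_spread : is_spread (\dim {:L}) proj_lines.
Proof.
split.
- rewrite map_inj_in_uniq ?proj_coords_uniq // => d d' pc_d pc_d' eq_l.
  apply: (proj_lines_meet pc_d pc_d' _ _ (in_basis_proj_neq0 pc_d)); rewrite -?eq_l;
    by apply/llineP; exists 1; rewrite lscale1.
- by move=> D /mapP[d pc_d ->]; apply/dim_lline/in_basis_proj_neq0.
- move=> D E /mapP[d pc_d ->] /mapP[d' pc_d' ->] neq_DE; apply/eqP; rewrite -subv0.
  apply/subvP => v; rewrite memv_cap memv0 => /andP[vD vE]; apply/negPn/negP => v_neq0.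
  by move: neq_DE; rewrite (proj_lines_meet pc_d pc_d' vD vE v_neq0) eqxx.
- move=> v; have [d pc_d [a ->]] := in_basis_proj_cover v.
  exists (lline (in_basis u w d)); last by apply/llineP; exists a.
  exact: (map_f (fun d => lline (in_basis u w d))).
Qed.

End DesarguesianSpread.

Lemma card_count (T : finType) (a : pred T) : #|[pred x | a x]| = count a (enum T).
Proof. by rewrite enumT cardE -size_filter /enum_mem. Qed.

Section HermitianTraceSpread.
Variables (K : finFieldType) (L : fieldExtType K) (Q : nat).
Variables (h : L * L -> L * L -> L) (T : L -> L).
Hypothesis herm : is_herm_form (fun x : L => x ^+ Q) h.
Hypothesis nondeg : nondegen_form h.
Hypothesis Q_gt1 : (1 < Q)%N.
Hypothesis cardL : #|FinFieldExtType L| = (Q ^ 2)%N.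
Hypothesis T0 : T 0 = 0.
Hypothesis T_neq0 : exists t, T t != 0.
Implicit Types (a b : L) (p r u v w x : L * L).
(* T stands for the trace; only T 0 = 0 and T <> 0 are used. *)
Local Notation trace_form := (fun u v => T (h u v)).

Let Q_gt0 : (0 < Q)%N. Proof. exact: ltnW. Qed.

Lemma lline_tot_iso p : h p p = 0 -> totally_isotropic trace_form (lline p).
Proof.
move=> pp_0 x y /llineP[a ->] /llineP[b ->].
by rewrite (herm_lscalel herm) (herm_lscaler herm) pp_0 !mulr0 T0.
Qed.

Lemma lline_trace_orth p v : (forall x, x \in lline p -> T (h x v) = 0) <-> h p v = 0.
Proof.
split=> [orth_pv | pv_0 x /llineP[a ->]]; last by rewrite (herm_lscalel herm) pv_0 mulr0 T0.
apply/eqP; apply: contraT => pv_neq0; have [t t_neq0] := T_neq0.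
suff : T t = 0 by move/eqP; rewrite (negbTE t_neq0).
rewrite -(divfK pv_neq0 t) -(herm_lscalel herm); apply: orth_pv.
by apply/llineP; exists (t / h p v).
Qed.

Lemma lline_not_tot_iso p : h p p != 0 -> ~ totally_isotropic trace_form (lline p).
Proof.
move=> /eqP pp_neq0 tot_p; apply/pp_neq0/lline_trace_orth => x px.
by apply: tot_p px _; apply/llineP; exists 1; rewrite lscale1.
Qed.

Lemma lline_polar p r : h p p != 0 -> h r p = 0 -> indep p r ->
  is_polar_of trace_form (lline p) (lline r).
Proof.
move=> pp_neq0 rp_0 ind_pr v; rewrite lline_trace_orth.
have orth_r := herm_orth_lscale herm v pp_neq0 rp_0 ind_pr.
split=> [/llineP/orth_r/eqP | /eqP].
  by rewrite -(herm_eq0C herm Q_gt0) => /eqP.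
by rewrite -(herm_eq0C herm Q_gt0) => /eqP/orth_r/llineP.
Qed.

Lemma count_iso_proj_coords u w : h w u = 0 -> h u u != 0 -> h w w != 0 ->
  count (fun d => h (in_basis u w d) (in_basis u w d) == 0) (proj_coords L) = Q.+1.
Proof.
move=> wu_0 uu_neq0 ww_neq0.
pose c := - h u u / h w w.
have iso_c y : (h (u + lscale y w) (u + lscale y w) == 0) = (y ^+ Q.+1 == c).
  rewrite (herm_orth_norm herm Q_gt0 _ wu_0) addrC addr_eq0 /c.
  by apply/eqP/eqP => [<- | ->]; rewrite ?mulfK ?divfK.
have c_neq0 : c != 0 by rewrite mulf_neq0 ?oppr_eq0 ?invr_eq0.
have c_fixed : c ^+ Q = c.
  rewrite /c exprMn exprVn -mulN1r exprMn !(herm_self_fixed herm).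
  by rewrite (exprN1_sqrt_card cardL) mulN1r.
rewrite /= /in_basis lscale0 lscale1 add0r (negbTE ww_neq0) add0n count_map.
rewrite -(card_norm_fiber Q_gt1 cardL c_neq0 c_fixed) card_count.
by apply: eq_count => y; rewrite /= lscale1 iso_c.
Qed.

Lemma exists_polar_proj_line u w p : indep u w -> h p p != 0 ->
  exists2 d, (d \in proj_coords L) && (h (in_basis u w d) (in_basis u w d) != 0) &
    is_polar_of trace_form (lline p) (lline (in_basis u w d)) /\
    (lline p :&: lline (in_basis u w d) = 0)%VS.
Proof.
move=> ind_uw pp_neq0; have [r [rp_0 rr_neq0 ind_pr]] := herm_perp herm nondeg Q_gt0 pp_neq0.
have [d pc_d [a r_eq]] := in_basis_proj_cover ind_uw r.
have a_neq0 : a != 0.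
  by apply: contraNneq rr_neq0 => a_0; rewrite r_eq a_0 lscale0 (herm0l herm).
exists d.
  rewrite pc_d; apply: contra rr_neq0 => /eqP iso_d.
  by rewrite r_eq (herm_lscalel herm) (herm_lscaler herm) iso_d !mulr0.
have -> : lline (in_basis u w d) = lline r by rewrite r_eq lline_lscale.
by split; [apply: lline_polar | apply: lline_cap0].
Qed.

Theorem hermitian_trace_spread : exists G N : seq {vspace (L * L)%type},
  [/\ is_spread (\dim {:L}) (G ++ N), size G = Q.+1, size N = (Q ^ 2 - Q)%N &
  [/\ forall D, D \in G -> totally_isotropic trace_form D,
      forall D, D \in N -> ~ totally_isotropic trace_form D &
      forall D, D \in N -> exists2 E, E \in N &
        is_polar_of trace_form D E /\ (D :&: E)%VS = 0%VS]].
Proof.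
have [u uu_neq0] := herm_exists_aniso herm nondeg Q_gt0
  (exists_Frobenius_trace_neq0 Q_gt1 cardL).
have [w [wu_0 ww_neq0 ind_uw]] := herm_perp herm nondeg Q_gt0 uu_neq0.
pose iso d := h (in_basis u w d) (in_basis u w d) == 0.
pose line d := lline (in_basis u w d).
have count_iso : count iso (proj_coords L) = Q.+1 by apply: count_iso_proj_coords.
exists [seq line d | d <- proj_coords L & iso d].
exists [seq line d | d <- proj_coords L & ~~ iso d].
split.
- apply: is_spread_perm (proj_lines_spread ind_uw).
  by rewrite perm_sym -map_cat perm_map // perm_filterC.
- by rewrite size_map size_filter.
- rewrite size_map size_filter -[count _ _]/(count (predC iso) (proj_coords L)).
  by have := count_predC iso (proj_coords L); rewrite count_iso size_proj_coords cardL; lia.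
split.
- by move=> D /mapP[d]; rewrite mem_filter => /andP[/eqP iso_d _] ->; apply: lline_tot_iso.
- by move=> D /mapP[d]; rewrite mem_filter => /andP[aniso_d _] ->; apply: lline_not_tot_iso.
- move=> D /mapP[d]; rewrite mem_filter => /andP[aniso_d _] ->.
  have [d' /andP[pc_d' aniso_d'] polar_d'] := exists_polar_proj_line ind_uw aniso_d.
  by exists (line d'); first by apply: map_f; rewrite mem_filter aniso_d'.
Qed.

End HermitianTraceSpread.

Lemma trq2_0 (L : fieldType) (q m : nat) : (0 < q)%N -> trq2 q m (0 : L) = 0.
Proof.
by move=> q_gt0; rewrite /trq2 big1 // => i _; rewrite expr0n expn_eq0 eqn0Ngt q_gt0.
Qed.

Theorem mainTheorem13 (m q : nat) (K : finFieldType) (L : fieldExtType K)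
  (h : L * L -> L * L -> L) :
  (1 <= m)%N -> prime_power q -> #|K| = (q ^ 2)%N ->
  \dim {: L}%VS = (2 * m - 1)%N ->
  is_herm_form (hconj q m) h -> nondegen_form h ->
  exists G N : seq {vspace (L * L)%type},
    [/\ is_spread (2 * m - 1) (G ++ N),
        size G = (q ^ (2 * m - 1)).+1,
        size N = (q ^ (4 * m - 2) - q ^ (2 * m - 1))%N &
        [/\ forall D, D \in G -> totally_isotropic (hbar q m h) D,
        forall D, D \in N -> ~ totally_isotropic (hbar q m h) D &
        forall D, D \in N -> exists2 E, E \in N &
          is_polar_of (hbar q m h) D E /\ (D :&: E)%VS = 0%VS]].
Proof.
move=> m_gt0 _ cardK dimL herm nondeg.
have q_gt1 : (1 < q)%N by rewrite -(ltn_exp2r _ _ (ltn0Sn 1)) exp1n -cardK finNzRing_gt1.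
set Q := (q ^ (2 * m - 1))%N.
have Q_gt1 : (1 < Q)%N by rewrite -(exp1n (2 * m - 1)) ltn_exp2r //; lia.
have Q_sq : (q ^ (4 * m - 2) = Q ^ 2)%N by rewrite -expnM; congr expn; lia.
have cardL : #|FinFieldExtType L| = (Q ^ 2)%N.
  by rewrite card_finFieldExt cardK dimL -!expnM; congr expn; lia.
have [t t_neq0] : exists t : FinFieldExtType L, trq2 q m t != 0.
  apply: exists_trace_poly_neq0 => //; first lia.
  by rewrite cardL -Q_sq ltn_exp2l //; lia.
have := hermitian_trace_spread herm nondeg Q_gt1 cardL (trq2_0 _ _ (ltnW q_gt1)).
by rewrite dimL Q_sq; apply; exists t.
Qed.
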